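(* Let $Z$ be an $\omega$-saturated $Z$-group, $G$ a definable group, and $f:(\bigcap_{n\ge1}nZ)^r\to G$ a type-definable group morphism. Let $\Sigma$ and $X\subseteq S^r(\emptyset)$ be as defined below. Suppose there exist a finite tuple $t$ from $Z$ and a type $p\in X$ with $p\vdash x\in(\bigcap_nnZ)^r$ such that $f$ is injective on the set of realizations of $p\cup\Sigma_t$. Then $f$ is injective.
   Context: A $Z$-group is a model of the complete theory of $(\mathbb{Z},+,<)$. $\Sigma(x,y)$, with $x\in Z^r$, $y\in Z$, is the partial type over $\emptyset$ with $(a,b)\models\Sigma$ iff for every nonzero $m\in\mathbb{Z}^r$ and every $k\in\mathbb{Z}_{>0}$, $k\max(|b|,1)<|m_1a_1+\dots+m_ra_r|$. For a finite tuple $b=(b_1,\dots,b_l)$, $\Sigma_b(x)=\bigcup_i\Sigma(x,b_i)$. $X\subseteq S^r(\emptyset)$ is the set of complete types $p$ over $\emptyset$ such that for every finite tuple $t$ there is $a\models p\cup\Sigma_t$. $\bigcap_nnZ$ is the (type-definable) subgroup of divisible elements. *)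

From Stdlib Require Import ZArith List Arith.
Import ListNotations.
Set Implicit Arguments.

Inductive term : Type :=
| tvar : nat -> term
| tadd : term -> term -> term.

Inductive form : Type :=
| feq : term -> term -> form
| flt : term -> term -> form
| fneg : form -> form
| fand : form -> form -> form
| fex : nat -> form -> form.

Fixpoint occurs_free_t (v : nat) (t : term) : Prop :=
  match t with
  | tvar i => i = v
  | tadd a b => occurs_free_t v a \/ occurs_free_t v b
  end.

Fixpoint occurs_free (v : nat) (phi : form) : Prop :=
  match phi with
  | feq a b | flt a b => occurs_free_t v a \/ occurs_free_t v b
  | fneg psi => occurs_free v psi
  | fand psi chi => occurs_free v psi \/ occurs_free v chi
  | fex w psi => v <> w /\ occurs_free v psi
  end.

Definition sentence (phi : form) : Prop := forall v, ~ occurs_free v phi.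

Definition fv_lt (r : nat) (phi : form) : Prop :=
  forall v, occurs_free v phi -> v < r.

(** Besides the language symbols (+,<), the record carries
    0, unary minus and 1; these are required (in [Zgroup]) to be the
    uniquely determined neutral element, inverse and least positive element,
    so they add no data.  They are NOT used by the satisfaction relation. *)
Record Str : Type := {
  car :> Type;
  sadd : car -> car -> car;
  sltb : car -> car -> bool;
  szero : car;
  sopp : car -> car;
  sone : car }.

Section Sem.
Variable M : Str.

Fixpoint eval (env : nat -> M) (t : term) : M :=
  match t with
  | tvar i => env i
  | tadd a b => sadd M (eval env a) (eval env b)
  end.

Definition upd (env : nat -> M) (n : nat) (a : M) : nat -> M :=
  fun i => if Nat.eqb i n then a else env i.

Fixpoint sat (env : nat -> M) (phi : form) : Prop :=
  match phi with
  | feq a b => eval env a = eval env b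
  | flt a b => sltb M (eval env a) (eval env b) = true
  | fneg psi => ~ sat env psi
  | fand psi chi => sat env psi /\ sat env chi
  | fex n psi => exists a : M, sat (upd env n a) psi
  end.

(** environment given by a finite tuple; further variables are sent to 0
    (which is 0-definable, so this adds no parameters) *)
Definition env_of (l : list M) : nat -> M := fun i => nth i l (szero M).

Fixpoint nmul (k : nat) (x : M) : M :=
  match k with
  | O => szero M
  | S k' => sadd M (nmul k' x) x
  end.

Definition zmul (z : Z) (x : M) : M :=
  match z with
  | Z0 => szero M
  | Zpos p => nmul (Pos.to_nat p) x
  | Zneg p => sopp M (nmul (Pos.to_nat p) x)
  end.

Definition absM (x : M) : M := if sltb M x (szero M) then sopp M x else x.
Definition maxM (x y : M) : M := if sltb M x y then y else x.

Fixpoint lincomb (m : list Z) (a : list M) : M :=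
  match m, a with
  | z :: m', x :: a' => sadd M (zmul z x) (lincomb m' a')
  | _, _ => szero M
  end.

Definition addv (a b : list M) : list M :=
  map (fun p => sadd M (fst p) (snd p)) (combine a b).

Definition definable (n : nat) (S : list M -> Prop) : Prop :=
  (forall l, S l -> length l = n) /\
  exists (phi : form) (B : list M),
    forall l, length l = n -> (S l <-> sat (env_of (l ++ B)) phi).

Definition type_definable (n : nat) (S : list M -> Prop) : Prop :=
  (forall l, S l -> length l = n) /\
  exists (Phi : form -> Prop) (B : list M),
    forall l, length l = n ->
      (S l <-> forall phi, Phi phi -> sat (env_of (l ++ B)) phi).

(** omega-saturation: every finitely satisfiable 1-type over a finite
    parameter set B is realized (x is variable 0, B occupies 1..|B|) *)
Definition omega_saturated : Prop :=
  forall (B : list M) (Phi : form -> Prop),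
    (forall L : list form, (forall phi, In phi L -> Phi phi) ->
       exists a : M, forall phi, In phi L -> sat (env_of (a :: B)) phi) ->
    exists a : M, forall phi, Phi phi -> sat (env_of (a :: B)) phi.

Definition definable_group (n : nat) (G : list M -> Prop)
    (mul : list M -> list M -> list M) : Prop :=
  definable n G /\
  definable (3 * n) (fun l => exists x y, G x /\ G y /\ l = x ++ y ++ mul x y) /\
  (forall x y, G x -> G y -> G (mul x y)) /\
  (forall x y z, G x -> G y -> G z -> mul (mul x y) z = mul x (mul y z)) /\
  (exists e, G e /\ (forall x, G x -> mul e x = x /\ mul x e = x) /\
     (forall x, G x -> exists y, G y /\ mul x y = e /\ mul y x = e)).

(** * The divisible subgroup  bigcap_n nZ  and its r-th power *)
Definition divisibleM (x : M) : Prop :=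
  forall k : nat, 1 <= k -> exists y : M, nmul k y = x.

Definition divpow (r : nat) (a : list M) : Prop :=
  length a = r /\ Forall divisibleM a.

Definition tdef_morphism (r n : nat) (G : list M -> Prop)
    (mul : list M -> list M -> list M) (f : list M -> list M) : Prop :=
  (forall a, divpow r a -> G (f a)) /\
  (forall a b, divpow r a -> divpow r b -> f (addv a b) = mul (f a) (f b)) /\
  type_definable (r + n) (fun l => exists a, divpow r a /\ l = a ++ f a).

Definition Sigma (a : list M) (b : M) : Prop :=
  forall m : list Z, length m = length a -> (exists z, In z m /\ z <> 0%Z) ->
  forall k : nat, 1 <= k ->
    sltb M (nmul k (maxM (absM b) (sone M))) (absM (lincomb m a)) = true.

Definition Sigma_t (a : list M) (t : list M) : Prop :=
  forall b, In b t -> Sigma a b.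

Definition realizes (p : form -> Prop) (a : list M) : Prop :=
  forall phi, p phi -> sat (env_of a) phi.

End Sem.

Definition Zstd : Str :=
  {| car := Z; sadd := Z.add; sltb := Z.ltb; szero := 0%Z; sopp := Z.opp;
     sone := 1%Z |}.

Definition models_ThZ (N : Str) : Prop :=
  forall phi, sentence phi -> sat Zstd (fun _ => 0%Z) phi ->
              sat N (fun _ => szero N) phi.

Definition Zgroup (M : Str) : Prop :=
  models_ThZ M /\
  (forall x : M, sadd M x (szero M) = x) /\
  (forall x : M, sadd M x (sopp M x) = szero M) /\
  sltb M (szero M) (sone M) = true /\
  (forall x : M, sltb M (szero M) x = true -> sltb M x (sone M) = false).

Definition complete_type (r : nat) (p : form -> Prop) : Prop :=
  (forall phi, p phi -> fv_lt r phi) /\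
  (forall phi, fv_lt r phi -> p phi \/ p (fneg phi)) /\
  (forall L : list form, (forall phi, In phi L -> p phi) ->
     exists a : list Z, length a = r /\
       forall phi, In phi L -> sat Zstd (env_of Zstd a) phi).

Definition entails (p : form -> Prop) (psi : form) : Prop :=
  forall N : Str, models_ThZ N -> forall env : nat -> N,
    (forall phi, p phi -> sat N env phi) -> sat N env psi.

(** term  t + ... + t  (k+1 copies) *)
Fixpoint tmulS (k : nat) (t : term) : term :=
  match k with
  | O => t
  | S k' => tadd (tmulS k' t) t
  end.

(** formula "x_i in (k+1)Z" *)
Definition div_form (k i : nat) : form :=
  fex (S i) (feq (tmulS k (tvar (S i))) (tvar i)).

Definition entails_divpow (r : nat) (p : form -> Prop) : Prop :=
  forall i k, i < r -> entails p (div_form k i).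

Definition inX (M : Str) (r : nat) (p : form -> Prop) : Prop :=
  complete_type r p /\
  forall t : list M, exists a : list M,
    length a = r /\ realizes M p a /\ Sigma_t M a t.

From Stdlib Require Import ZArith List Arith Lia Classical.
Import ListNotations.

(** Let [a, a'] be divisible tuples with [f a = f a'] and put [d = a - a'];
    then [d] is divisible and [f d] is the identity of [G].  Choose [c]
    realizing [p] together with [Sigma] over [t] enlarged by [|d|] (this is
    what [p] in [X] provides).  Every nonzero integer combination of [c] lies
    outside the convex subgroup [H] generated by [|d|], while [d] is divisible
    and lies in [H].  A back-and-forth argument for ordered abelian groups
    (Section [ConvexTransfer]) then shows that translating by [d] preserves
    all formulas, so [c + d] realizes [p] as well; it also still satisfies
    [Sigma] over [t].  Since [f (c + d) = f c], the hypothesis gives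
    [c + d = c], hence [d = 0] and [a = a']. *)

(** * Z-groups are ordered abelian groups *)

Definition fall (v : nat) (phi : form) : form := fneg (fex v (fneg phi)).
Definition fimp (phi psi : form) : form := fneg (fand phi (fneg psi)).

Lemma sat_fall_intro (N : Str) env v phi :
  (forall a, sat N (upd N env v a) phi) -> sat N env (fall v phi).
Proof. unfold fall; simpl. intros H [a Ha]. apply Ha, H. Qed.

Lemma sat_fall_elim (N : Str) env v phi :
  sat N env (fall v phi) -> forall a, sat N (upd N env v a) phi.
Proof. unfold fall; simpl. intros H a. apply NNPP. intro Q. apply H. eauto. Qed.

Lemma sat_imp_intro (N : Str) env phi psi :
  (sat N env phi -> sat N env psi) -> sat N env (fimp phi psi).
Proof. unfold fimp; simpl. tauto. Qed.

Lemma sat_imp_elim (N : Str) env phi psi :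
  sat N env (fimp phi psi) -> sat N env phi -> sat N env psi.
Proof. unfold fimp; simpl. intros H Hphi. apply NNPP. tauto. Qed.

(** Each universal axiom below is a closed formula, true in [(Z,+,<)] and
    hence in every model of its theory; the tactic proves the premises of
    [models_ThZ] for such a universal closure. *)
Ltac universal_sentence :=
  split;
  [ unfold sentence, fall, fimp; intros v Hv; simpl in Hv; lia
  | repeat (apply sat_fall_intro; intro); try apply sat_imp_intro; simpl;
    rewrite ?Z.ltb_lt; lia ].

Section ZgroupAxioms.
Variable M : Str.
Hypothesis HT : models_ThZ M.
Local Notation v0 := (tvar 0).
Local Notation v1 := (tvar 1).
Local Notation v2 := (tvar 2).

Lemma ThZ_universal phi :
  sentence phi /\ sat Zstd (fun _ => 0%Z) phi -> sat M (fun _ => szero M) phi.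
Proof. intros [Hs Hz]. exact (HT phi Hs Hz). Qed.

Lemma Zgroup_addA (x y z : M) : sadd M (sadd M x y) z = sadd M x (sadd M y z).
Proof.
  pose proof (ThZ_universal
    (fall 0 (fall 1 (fall 2 (feq (tadd (tadd v0 v1) v2) (tadd v0 (tadd v1 v2)))))))
    as Q.
  specialize (Q ltac:(universal_sentence)).
  exact (sat_fall_elim _ _ _ _ (sat_fall_elim _ _ _ _ (sat_fall_elim _ _ _ _ Q x) y) z).
Qed.

Lemma Zgroup_addC (x y : M) : sadd M x y = sadd M y x.
Proof.
  pose proof (ThZ_universal (fall 0 (fall 1 (feq (tadd v0 v1) (tadd v1 v0))))) as Q.
  specialize (Q ltac:(universal_sentence)).
  exact (sat_fall_elim _ _ _ _ (sat_fall_elim _ _ _ _ Q x) y).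
Qed.

Lemma Zgroup_lt_irr (x : M) : sltb M x x = false.
Proof.
  pose proof (ThZ_universal (fall 0 (fneg (flt v0 v0)))) as Q.
  specialize (Q ltac:(universal_sentence)).
  pose proof (sat_fall_elim _ _ _ _ Q x) as R. simpl in R; unfold upd in R; simpl in R.
  destruct (sltb M x x); tauto.
Qed.

Lemma Zgroup_lt_trans (x y z : M) :
  sltb M x y = true -> sltb M y z = true -> sltb M x z = true.
Proof.
  pose proof (ThZ_universal (fall 0 (fall 1 (fall 2
    (fimp (fand (flt v0 v1) (flt v1 v2)) (flt v0 v2)))))) as Q.
  specialize (Q ltac:(universal_sentence)).
  intros Hxy Hyz.
  exact (sat_imp_elim _ _ _ _ (sat_fall_elim _ _ _ _
    (sat_fall_elim _ _ _ _ (sat_fall_elim _ _ _ _ Q x) y) z) (conj Hxy Hyz)).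
Qed.

Lemma Zgroup_lt_total (x y : M) :
  sltb M x y = true \/ x = y \/ sltb M y x = true.
Proof.
  pose proof (ThZ_universal (fall 0 (fall 1
    (fneg (fand (fneg (flt v0 v1)) (fand (fneg (feq v0 v1)) (fneg (flt v1 v0)))))))) as Q.
  specialize (Q ltac:(universal_sentence)).
  pose proof (sat_fall_elim _ _ _ _ (sat_fall_elim _ _ _ _ Q x) y) as R.
  simpl in R; unfold upd in R; simpl in R.
  destruct (sltb M x y), (sltb M y x); auto.
  destruct (classic (x = y)); tauto.
Qed.

Lemma Zgroup_lt_addr (x y z : M) :
  sltb M x y = true -> sltb M (sadd M x z) (sadd M y z) = true.
Proof.
  pose proof (ThZ_universal (fall 0 (fall 1 (fall 2
    (fimp (flt v0 v1) (flt (tadd v0 v2) (tadd v1 v2))))))) as Q.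
  specialize (Q ltac:(universal_sentence)).
  exact (sat_imp_elim _ _ _ _ (sat_fall_elim _ _ _ _
    (sat_fall_elim _ _ _ _ (sat_fall_elim _ _ _ _ Q x) y) z)).
Qed.

End ZgroupAxioms.

Lemma group_right_unit {A : Type} (G : A -> Prop) (mul : A -> A -> A) (e x y : A) :
  (forall x y z, G x -> G y -> G z -> mul (mul x y) z = mul x (mul y z)) ->
  (forall x, G x -> mul e x = x) ->
  (forall x, G x -> exists x', G x' /\ mul x' x = e) ->
  G x -> G y -> mul x y = x -> y = e.
Proof.
  intros Assoc Unit Inv Gx Gy E. destruct (Inv x Gx) as [x' [Gx' Ex']].
  rewrite <- (Unit y Gy), <- Ex', Assoc, E; auto.
Qed.

(** * Ordered abelian groups *)

Section OrderedGroup.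
Variable M : Str.
Local Notation "x ⊕ y" := (sadd M x y) (at level 50, left associativity).
Local Notation "⊖ x" := (sopp M x) (at level 35, right associativity).
Local Notation O0 := (szero M).
Local Notation lt x y := (sltb M x y = true).
Local Notation le x y := (sltb M y x = false).

Hypothesis addA : forall x y z : M, x ⊕ y ⊕ z = x ⊕ (y ⊕ z).
Hypothesis addC : forall x y : M, x ⊕ y = y ⊕ x.
Hypothesis add0 : forall x : M, x ⊕ O0 = x.
Hypothesis addN : forall x : M, x ⊕ ⊖ x = O0.
Hypothesis lt_irr : forall x : M, sltb M x x = false.
Hypothesis lt_trans : forall x y z : M, lt x y -> lt y z -> lt x z.
Hypothesis lt_total : forall x y : M, lt x y \/ x = y \/ lt y x.
Hypothesis lt_addr : forall x y z : M, lt x y -> lt (x ⊕ z) (y ⊕ z).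

Lemma add0l x : O0 ⊕ x = x. Proof. rewrite addC; apply add0. Qed.
Lemma addNl x : ⊖ x ⊕ x = O0. Proof. rewrite addC; apply addN. Qed.
Lemma addCA x y z : x ⊕ (y ⊕ z) = y ⊕ (x ⊕ z).
Proof. rewrite <- !addA, (addC x y); reflexivity. Qed.
Lemma addACA a b c d : a ⊕ b ⊕ (c ⊕ d) = a ⊕ c ⊕ (b ⊕ d).
Proof. rewrite !addA, (addCA b c d); reflexivity. Qed.
Lemma addKr x y : x ⊕ y ⊕ ⊖ y = x. Proof. rewrite addA, addN, add0; auto. Qed.
Lemma addKl x y : ⊖ x ⊕ (x ⊕ y) = y. Proof. rewrite <- addA, addNl, add0l; auto. Qed.
Lemma add_cancel x y z : x ⊕ z = y ⊕ z -> x = y.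
Proof. intro H. rewrite <- (addKr x z), H, addKr. auto. Qed.
Lemma opp_unique x y : x ⊕ y = O0 -> y = ⊖ x.
Proof. intro H. apply (add_cancel _ _ x). rewrite addC, H, addNl. auto. Qed.
Lemma oppK x : ⊖ ⊖ x = x.
Proof. symmetry. apply opp_unique. apply addNl. Qed.
Lemma opp0 : ⊖ O0 = O0.
Proof. symmetry; apply opp_unique; apply add0. Qed.
Lemma oppD x y : ⊖ (x ⊕ y) = ⊖ x ⊕ ⊖ y.
Proof. symmetry; apply opp_unique. rewrite addACA, !addN, add0. auto. Qed.
Lemma subr_eq0 x y : x ⊕ ⊖ y = O0 -> x = y.
Proof. intro H. apply opp_unique in H. rewrite <- (oppK x), <- H, oppK. auto. Qed.

Lemma nmulD k x y : nmul M k (x ⊕ y) = nmul M k x ⊕ nmul M k y.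
Proof. induction k; simpl. - rewrite add0; auto. - rewrite IHk, addACA; auto. Qed.
Lemma nmul_plus a b x : nmul M (a + b) x = nmul M a x ⊕ nmul M b x.
Proof.
  induction b; simpl.
  - rewrite Nat.add_0_r, add0; auto.
  - rewrite Nat.add_succ_r; simpl. rewrite IHb, addA; auto.
Qed.
Lemma nmul_mult a b x : nmul M (a * b) x = nmul M a (nmul M b x).
Proof. induction a; simpl; auto. rewrite nmul_plus, IHa, addC; auto. Qed.
Lemma nmulN k x : nmul M k (⊖ x) = ⊖ nmul M k x.
Proof. induction k; simpl. - rewrite opp0; auto. - rewrite IHk, oppD; auto. Qed.
Lemma nmul0 k : nmul M k O0 = O0.
Proof. induction k; simpl; auto. rewrite IHk, add0; auto. Qed.
Lemma nmul1 x : nmul M 1 x = x. Proof. simpl; apply add0l. Qed.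

Lemma zmul_succ z x : zmul M (Z.succ z) x = zmul M z x ⊕ x.
Proof.
  destruct z as [|p|p].
  - simpl. rewrite add0l; auto.
  - unfold Z.succ; simpl. rewrite Pos.add_1_r, Pos2Nat.inj_succ. reflexivity.
  - destruct (Pos.eq_dec p 1) as [->|Hp].
    + simpl. rewrite add0l, addNl. reflexivity.
    + replace (Z.succ (Z.neg p)) with (Z.neg (Pos.pred p)).
      * simpl. rewrite <- (Pos.succ_pred p) at 2 by auto.
        rewrite Pos2Nat.inj_succ; simpl. rewrite oppD, addA, addNl, add0. reflexivity.
      * rewrite <- (Pos.succ_pred p) at 2 by auto. rewrite <- Pos.add_1_r.
        rewrite <- Pos2Z.add_neg_neg. lia.
Qed.
Lemma zmul_pred z x : zmul M (Z.pred z) x = zmul M z x ⊕ ⊖ x.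
Proof. rewrite <- (Z.succ_pred z) at 2. rewrite zmul_succ, addKr. auto. Qed.
Lemma zmul0 x : zmul M 0 x = O0. Proof. reflexivity. Qed.
Lemma zmul1 x : zmul M 1 x = x. Proof. apply nmul1. Qed.
Lemma zmulDl a b x : zmul M (a + b) x = zmul M a x ⊕ zmul M b x.
Proof.
  induction b using Z.peano_ind.
  - rewrite Z.add_0_r, add0; auto.
  - rewrite Z.add_succ_r, !zmul_succ, IHb, addA; auto.
  - rewrite Z.add_pred_r, !zmul_pred, IHb, addA; auto.
Qed.
Lemma zmulDr z x y : zmul M z (x ⊕ y) = zmul M z x ⊕ zmul M z y.
Proof.
  induction z using Z.peano_ind.
  - simpl. rewrite add0; auto.
  - rewrite !zmul_succ, IHz, addACA; auto.
  - rewrite !zmul_pred, IHz, oppD, addACA; auto.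
Qed.
Lemma zmulNl z x : zmul M (- z) x = ⊖ zmul M z x.
Proof. apply opp_unique. rewrite <- zmulDl, Z.add_opp_diag_r. auto. Qed.
Lemma zmul_r0 z : zmul M z O0 = O0.
Proof. destruct z; simpl; rewrite ?nmul0, ?opp0; auto. Qed.
Lemma zmulNr z x : zmul M z (⊖ x) = ⊖ zmul M z x.
Proof. apply opp_unique. rewrite <- zmulDr, addN. apply zmul_r0. Qed.
Lemma zmul_mul a b x : zmul M (a * b) x = zmul M a (zmul M b x).
Proof.
  induction a using Z.peano_ind.
  - reflexivity.
  - rewrite Z.mul_succ_l, zmulDl, zmul_succ, IHa; auto.
  - rewrite Z.mul_pred_l, <- Z.add_opp_r, zmulDl, zmulNl, zmul_pred, IHa. auto.
Qed.
Lemma zmul_m1 x : zmul M (-1) x = ⊖ x.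
Proof. change (⊖ nmul M 1 x = ⊖ x). rewrite nmul1; auto. Qed.
Lemma zmul_comm a b x : zmul M a (zmul M b x) = zmul M b (zmul M a x).
Proof. rewrite <- !zmul_mul, Z.mul_comm; auto. Qed.
Lemma zmul_of_nat k x : zmul M (Z.of_nat k) x = nmul M k x.
Proof. destruct k; simpl; auto. rewrite SuccNat2Pos.id_succ. auto. Qed.

Lemma lt_le x y : lt x y -> le x y.
Proof.
  intro H. destruct (sltb M y x) eqn:E; auto.
  pose proof (lt_trans _ _ _ H E). rewrite lt_irr in H0; discriminate.
Qed.
Lemma le_refl x : le x x. Proof. apply lt_irr. Qed.
Lemma le_total x y : le x y \/ lt y x.
Proof. destruct (sltb M y x); auto. Qed.
Lemma le_lt_trans x y z : le x y -> lt y z -> lt x z.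
Proof.
  intros H1 H2. destruct (lt_total x z) as [H|[H|H]]; auto.
  - subst. congruence.
  - pose proof (lt_trans _ _ _ H2 H). congruence.
Qed.
Lemma lt_le_trans x y z : lt x y -> le y z -> lt x z.
Proof.
  intros H1 H2. destruct (lt_total x z) as [H|[H|H]]; auto.
  - subst. congruence.
  - pose proof (lt_trans _ _ _ H H1). congruence.
Qed.
Lemma le_trans x y z : le x y -> le y z -> le x z.
Proof.
  intros H1 H2. destruct (sltb M z x) eqn:E; auto.
  pose proof (le_lt_trans _ _ _ H2 E). congruence.
Qed.
Lemma le_antisym x y : le x y -> le y x -> x = y.
Proof. intros. destruct (lt_total x y) as [H1|[H1|H1]]; congruence. Qed.
Lemma lt_addl x y z : lt x y -> lt (z ⊕ x) (z ⊕ y).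
Proof. intro H. rewrite (addC z x), (addC z y). apply lt_addr; auto. Qed.
Lemma le_addr x y z : le x y -> le (x ⊕ z) (y ⊕ z).
Proof.
  intro H. destruct (sltb M (y ⊕ z) (x ⊕ z)) eqn:E; auto.
  apply (lt_addr _ _ (⊖ z)) in E. rewrite !addKr in E. congruence.
Qed.
Lemma le_add a b c d : le a b -> le c d -> le (a ⊕ c) (b ⊕ d).
Proof.
  intros H1 H2. apply le_trans with (b ⊕ c).
  - apply le_addr; auto.
  - rewrite (addC b c), (addC b d). apply le_addr; auto.
Qed.
Lemma le_addpos x y : le O0 y -> le x (x ⊕ y).
Proof.
  intro H. apply le_trans with (x ⊕ O0).
  - rewrite add0; apply le_refl.
  - rewrite (addC x O0), (addC x y). apply le_addr; auto.
Qed.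
Lemma lt_opp x y : lt x y -> lt (⊖ y) (⊖ x).
Proof.
  intro H. apply (lt_addr _ _ (⊖ x ⊕ ⊖ y)) in H.
  rewrite <- addA, addN, add0l in H. rewrite addCA, addN, add0 in H. auto.
Qed.
Lemma lt_opp0 x : lt x O0 -> lt O0 (⊖ x).
Proof. intro H. apply lt_opp in H. rewrite opp0 in H. auto. Qed.

Lemma abs_pos x : le O0 x -> absM M x = x.
Proof. intro H. unfold absM. rewrite H. auto. Qed.
Lemma abs_neg x : lt x O0 -> absM M x = ⊖ x.
Proof. intro H. unfold absM. rewrite H. auto. Qed.
Lemma abs_ge0 x : le O0 (absM M x).
Proof.
  destruct (le_total O0 x) as [H|H].
  - rewrite abs_pos; auto.
  - rewrite abs_neg; auto. apply lt_le, lt_opp0; auto.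
Qed.
Lemma abs_opp x : absM M (⊖ x) = absM M x.
Proof.
  destruct (lt_total x O0) as [H|[H|H]].
  - rewrite (abs_neg x) by auto. apply abs_pos, lt_le, lt_opp0; auto.
  - subst. rewrite opp0; auto.
  - rewrite (abs_pos x) by (apply lt_le; auto). rewrite abs_neg. apply oppK.
    apply lt_opp in H. rewrite opp0 in H; auto.
Qed.
Lemma le_abs x : le x (absM M x).
Proof.
  destruct (le_total O0 x) as [H|H].
  - rewrite abs_pos; auto.
  - rewrite abs_neg; auto. apply lt_le. apply lt_trans with O0; auto. apply lt_opp0; auto.
Qed.
Lemma abs_triangle x y : le (absM M (x ⊕ y)) (absM M x ⊕ absM M y).
Proof.
  destruct (le_total O0 (x ⊕ y)) as [H|H].
  - rewrite (abs_pos (x ⊕ y)); auto. apply le_add; apply le_abs.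
  - rewrite (abs_neg (x ⊕ y)), oppD; auto.
    apply le_add; rewrite <- abs_opp; apply le_abs.
Qed.
Lemma abs_eq0 x : absM M x = O0 -> x = O0.
Proof.
  destruct (le_total O0 x) as [H|H].
  - rewrite abs_pos; auto.
  - rewrite abs_neg; auto. intro E. rewrite <- (oppK x), E, opp0; auto.
Qed.
Lemma nmul_ge0 k x : le O0 x -> le O0 (nmul M k x).
Proof. intro H. induction k; simpl. - apply le_refl. - rewrite <- (add0 O0). apply le_add; auto. Qed.
Lemma nmul_ge k x : (1 <= k)%nat -> le O0 x -> le x (nmul M k x).
Proof.
  intros Hk H. destruct k as [|k]; [lia|]. simpl. rewrite addC. apply le_addpos, nmul_ge0; auto.
Qed.
Lemma nmul_mono k x y : le x y -> le (nmul M k x) (nmul M k y).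
Proof. intro H. induction k; simpl. - apply le_refl. - apply le_add; auto. Qed.
Lemma abs_nmul k x : absM M (nmul M k x) = nmul M k (absM M x).
Proof.
  destruct (le_total O0 x) as [H|H].
  - rewrite !abs_pos; auto. apply nmul_ge0; auto.
  - rewrite (abs_neg x) by auto. rewrite <- (oppK x) at 1. rewrite nmulN, abs_opp.
    apply abs_pos, nmul_ge0, lt_le, lt_opp0; auto.
Qed.

(** A nonzero multiple is at least as large in absolute value; hence an
    ordered abelian group is torsion-free. *)
Lemma le_abs_zmul z x : z <> 0%Z -> le (absM M x) (absM M (zmul M z x)).
Proof.
  intro Hz. destruct z as [|p|p]; [congruence| |]; simpl.
  - rewrite abs_nmul. apply nmul_ge; [lia | apply abs_ge0].
  - rewrite abs_opp, abs_nmul. apply nmul_ge; [lia | apply abs_ge0].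
Qed.
Lemma zmul_torsion z y : z <> 0%Z -> zmul M z y = O0 -> y = O0.
Proof.
  intros Hz H. pose proof (le_abs_zmul z y Hz) as Q. rewrite H, abs_pos in Q by apply le_refl.
  apply abs_eq0, le_antisym; auto. apply abs_ge0.
Qed.
Lemma nmul_cancel k a b : (1 <= k)%nat -> nmul M k a = nmul M k b -> a = b.
Proof.
  intros Hk H. apply subr_eq0, (zmul_torsion (Z.of_nat k)); [lia|].
  rewrite zmulDr, zmulNr, !zmul_of_nat, H. apply addN.
Qed.

Lemma div_zero : divisibleM M O0.
Proof. intros k _. exists O0. apply nmul0. Qed.
Lemma div_add x y : divisibleM M x -> divisibleM M y -> divisibleM M (x ⊕ y).
Proof.
  intros Hx Hy k Hk. destruct (Hx k Hk) as [a Ha], (Hy k Hk) as [b Hb].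
  exists (a ⊕ b). rewrite nmulD, Ha, Hb; auto.
Qed.
Lemma div_opp x : divisibleM M x -> divisibleM M (⊖ x).
Proof. intros Hx k Hk. destruct (Hx k Hk) as [a Ha]. exists (⊖ a). rewrite nmulN, Ha; auto. Qed.
Lemma div_zmul z x : divisibleM M x -> divisibleM M (zmul M z x).
Proof.
  intros Hx k Hk. destruct (Hx k Hk) as [a Ha]. exists (zmul M z a).
  rewrite <- zmul_of_nat, zmul_comm, zmul_of_nat, Ha; auto.
Qed.

(** The divisible elements form a divisible group: by torsion-freeness the
    [k]-th root of a divisible element is again divisible. *)
Lemma div_solve w z : divisibleM M w -> z <> 0%Z ->
  exists e, divisibleM M e /\ zmul M z e = w.
Proof.
  intros Hw Hz. assert (Hk : (1 <= Z.abs_nat z)%nat) by lia.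
  destruct (Hw _ Hk) as [y Hy].
  assert (Dy : divisibleM M y).
  { intros j Hj. destruct (Hw (Z.abs_nat z * j)%nat) as [w' Hw']; [nia|].
    exists w'. apply (nmul_cancel (Z.abs_nat z)); auto. rewrite <- nmul_mult, Hw', Hy; auto. }
  destruct z as [|p|p]; [congruence| |].
  - exists y. auto.
  - exists (⊖ y). split; [apply div_opp; auto|]. simpl. rewrite nmulN, oppK. auto.
Qed.

(** ** Linear forms
    A linear form is a list of (variable, coefficient) pairs; every term of
    the language evaluates as a linear form with coefficients 1. *)

Fixpoint lin (L : list (nat * Z)) (env : nat -> M) : M :=
  match L with
  | [] => O0
  | p :: L' => zmul M (snd p) (env (fst p)) ⊕ lin L' env
  end.

Definition dropv (v : nat) (L : list (nat * Z)) : list (nat * Z) :=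
  filter (fun p => negb (Nat.eqb (fst p) v)) L.
Fixpoint coefv (v : nat) (L : list (nat * Z)) : Z :=
  match L with
  | [] => 0%Z
  | p :: L' => if Nat.eqb (fst p) v then (snd p + coefv v L')%Z else coefv v L'
  end.
Definition scaleL (z : Z) (L : list (nat * Z)) : list (nat * Z) :=
  map (fun p => (fst p, (z * snd p)%Z)) L.
Fixpoint tlin (t : term) : list (nat * Z) :=
  match t with
  | tvar i => [(i, 1%Z)]
  | tadd a b => tlin a ++ tlin b
  end.

Lemma lin_app L1 L2 env : lin (L1 ++ L2) env = lin L1 env ⊕ lin L2 env.
Proof. induction L1; simpl. - rewrite add0l; auto. - rewrite IHL1, addA; auto. Qed.
Lemma lin_scale z L env : lin (scaleL z L) env = zmul M z (lin L env).
Proof. induction L; simpl. - rewrite zmul_r0; auto. - rewrite IHL, zmulDr, zmul_mul; auto. Qed.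
Lemma lin_ext L env env' : (forall i, env i = env' i) -> lin L env = lin L env'.
Proof. intro E. induction L; simpl; auto. rewrite IHL, E; auto. Qed.
Lemma lin_envD L env env' : lin L (fun i => env i ⊕ env' i) = lin L env ⊕ lin L env'.
Proof. induction L; simpl. - rewrite add0; auto. - rewrite IHL, zmulDr, addACA; auto. Qed.
Lemma lin_envN L env : lin L (fun i => ⊖ env i) = ⊖ lin L env.
Proof. induction L; simpl. - rewrite opp0; auto. - rewrite IHL, zmulNr, oppD; auto. Qed.
Lemma lin_upd L env v u : lin L (upd M env v u) = lin (dropv v L) env ⊕ zmul M (coefv v L) u.
Proof.
  induction L as [|[j z] L IH]; simpl.
  - rewrite add0; auto.
  - unfold upd at 1. destruct (Nat.eqb j v); simpl.
    + rewrite IH, zmulDl, addCA. auto.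
    + rewrite IH, addA; auto.
Qed.
Lemma eval_lin t env : eval M env t = lin (tlin t) env.
Proof.
  induction t; cbn [eval tlin lin fst snd app].
  - rewrite add0, zmul1; auto.
  - rewrite lin_app, IHt1, IHt2; auto.
Qed.

Lemma div_lin L env : (forall i, divisibleM M (env i)) -> divisibleM M (lin L env).
Proof. intro Hd. induction L; simpl. - apply div_zero. - apply div_add; auto. apply div_zmul; auto. Qed.

(** the linear form of [t - s], whose sign decides the atomic formulas *)
Definition diffL (t s : term) : list (nat * Z) := tlin t ++ scaleL (-1) (tlin s).

Lemma lin_diffL t s env : lin (diffL t s) env = eval M env t ⊕ ⊖ eval M env s.
Proof. unfold diffL. rewrite lin_app, lin_scale, zmul_m1, !eval_lin. auto. Qed.

Lemma lt_sub a b : lt a b <-> lt (a ⊕ ⊖ b) O0.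
Proof.
  split; intro Q.
  - apply (lt_addr _ _ (⊖ b)) in Q. rewrite addN in Q; auto.
  - apply (lt_addr _ _ b) in Q. rewrite addA, addNl, add0, add0l in Q; auto.
Qed.

(** ** Translations preserving all formulas
    Fix a convex subgroup [Hs].  Two environments are related when their
    difference is divisible, lies in [Hs], and every linear form either
    vanishes on the difference or takes a value outside [Hs] at the first
    environment.  Related environments satisfy the same formulas: atomic
    formulas only see the sign of a linear form, which is unchanged by
    adding an element of [Hs] to an element outside [Hs], and divisibility
    of the difference makes the relation a back-and-forth system. *)

Section ConvexTransfer.
Variable Hs : M -> Prop.
Hypothesis H0 : Hs O0.
Hypothesis Hadd : forall x y, Hs x -> Hs y -> Hs (x ⊕ y).
Hypothesis Hopp : forall x, Hs x -> Hs (⊖ x).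
Hypothesis Hconv : forall x y, le (absM M x) (absM M y) -> Hs y -> Hs x.

Lemma H_zmul z x : Hs x -> Hs (zmul M z x).
Proof.
  intro Hx. induction z using Z.peano_ind.
  - apply H0.
  - rewrite zmul_succ; auto.
  - rewrite zmul_pred; auto.
Qed.
Lemma H_lin L env : (forall i, Hs (env i)) -> Hs (lin L env).
Proof. intro He. induction L; simpl; auto. apply Hadd; auto. apply H_zmul; auto. Qed.
Lemma H_sub x y : Hs (x ⊕ y) -> Hs y -> Hs x.
Proof. intros H1 H2. rewrite <- (addKr x y). auto. Qed.

Lemma convex_lt0 w h : ~ Hs w -> Hs h -> lt w O0 -> lt (w ⊕ h) O0.
Proof.
  intros Nw Hh Hw. destruct (le_total (absM M w) (absM M h)) as [Q|Q].
  { exfalso; apply Nw, (Hconv w h); auto. }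
  rewrite (abs_neg w) in Q by auto.
  assert (Q2 : lt h (⊖ w)) by (apply le_lt_trans with (absM M h); auto; apply le_abs).
  apply (lt_addr _ _ w) in Q2. rewrite addNl, addC in Q2. auto.
Qed.

Lemma convex_sign x h :
  ~ Hs x -> Hs h -> (x = O0 <-> x ⊕ h = O0) /\ (lt x O0 <-> lt (x ⊕ h) O0).
Proof.
  intros Nx Hh.
  assert (Nxh : ~ Hs (x ⊕ h)) by (intro Q; apply Nx, (H_sub _ _ Q Hh)).
  split; split; intro Q.
  - exfalso; apply Nx. rewrite Q; auto.
  - exfalso; apply Nxh. rewrite Q; auto.
  - apply convex_lt0; auto.
  - rewrite <- (addKr x h). apply convex_lt0; auto.
Qed.

Definition shift (env env' : nat -> M) (i : nat) : M := env' i ⊕ ⊖ env i.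

Definition Rel (env env' : nat -> M) : Prop :=
  (forall i, divisibleM M (shift env env' i)) /\ (forall i, Hs (shift env env' i)) /\
  forall L, lin L (shift env env') = O0 \/ ~ Hs (lin L env).

Lemma lin_shift L env env' : lin L env' = lin L env ⊕ lin L (shift env env').
Proof. rewrite <- lin_envD. apply lin_ext. intro i. unfold shift. rewrite addCA, addN, add0; auto. Qed.

Lemma shift_upd env env' v u e i :
  shift (upd M env v u) (upd M env' v (u ⊕ e)) i = upd M (shift env env') v e i.
Proof. unfold shift, upd. destruct (Nat.eqb i v); auto. rewrite addC, addKl; auto. Qed.

Lemma Rel_sign env env' L : Rel env env' ->
  (lin L env = O0 <-> lin L env' = O0) /\ (lt (lin L env) O0 <-> lt (lin L env') O0).
Proof.
  intros [_ [HH C]]. rewrite (lin_shift L env env').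
  destruct (C L) as [C1|C1].
  - rewrite C1, add0. tauto.
  - apply convex_sign; auto. apply H_lin; auto.
Qed.

(** the relation is symmetric, giving the back step from the forth step *)
Lemma Rel_sym env env' : Rel env env' -> Rel env' env.
Proof.
  intros [D [HH C]].
  assert (E : forall i, shift env' env i = ⊖ shift env env' i).
  { intro i. unfold shift. rewrite oppD, oppK, addC; auto. }
  split; [|split].
  - intro i. rewrite E. apply div_opp; auto.
  - intro i. rewrite E. apply Hopp; auto.
  - intro L. rewrite (lin_ext L _ _ E), lin_envN.
    destruct (C L) as [C1|C1].
    + left. rewrite C1, opp0; auto.
    + right. intro HL. apply C1. rewrite (lin_shift L env env') in HL.
      apply (H_sub _ _ HL). apply H_lin; auto.
Qed.

(** Forth step when some form with a nonzero coefficient [n0] at [v] puts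
    the new point [u] into [Hs]: the image [u + e] is chosen so that this
    form has the same value; [e] exists since the difference is divisible. *)
Lemma Rel_forth_bounded env env' v u L0f :
  Rel env env' -> coefv v L0f <> 0%Z -> Hs (lin L0f (upd M env v u)) ->
  exists u', Rel (upd M env v u) (upd M env' v u').
Proof.
  intros [D [HH C]] Hn0 Hs0. rewrite lin_upd in Hs0.
  set (n0 := coefv v L0f) in *. set (L0 := dropv v L0f) in *.
  set (δ := shift env env').
  destruct (div_solve (⊖ lin L0 δ) n0) as [e [De He]]; [apply div_opp, div_lin, D | exact Hn0 |].
  assert (He_in : Hs e).
  { apply (Hconv e (zmul M n0 e)); [apply le_abs_zmul; auto|].
    rewrite He. apply Hopp, H_lin, HH. }
  exists (u ⊕ e). split; [|split].
  - intro i. rewrite shift_upd. unfold upd. destruct (Nat.eqb i v); auto.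
  - intro i. rewrite shift_upd. unfold upd. destruct (Nat.eqb i v); auto.
  - intro L. rewrite (lin_ext L _ _ (shift_upd env env' v u e)), !lin_upd.
    set (β := coefv v L). set (L' := dropv v L).
    destruct (Z.eq_dec β 0) as [Hb|Hb].
    { rewrite Hb, !zmul0, !add0. apply C. }
    set (L2 := scaleL n0 L' ++ scaleL (- β) L0).
    destruct (C L2) as [C1|C1].
    + left. apply (zmul_torsion n0); auto.
      rewrite <- C1. unfold L2. fold δ. rewrite lin_app, !lin_scale, zmulDr.
      rewrite zmul_comm, He, zmulNr, zmulNl. auto.
    + right. intro HV. apply C1. unfold L2. rewrite lin_app, !lin_scale.
      apply (H_sub _ (zmul M β (lin L0 env ⊕ zmul M n0 u))); [|apply H_zmul; auto].
      replace (zmul M n0 (lin L' env) ⊕ zmul M (- β) (lin L0 env) ⊕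
               zmul M β (lin L0 env ⊕ zmul M n0 u))
        with (zmul M n0 (lin L' env ⊕ zmul M β u)) by
        (rewrite !zmulDr, zmulNl, (zmul_comm n0 β u), (addA (zmul M n0 (lin L' env))), addKl;
         auto).
      apply H_zmul; auto.
Qed.

Lemma Rel_forth_free env env' v u :
  Rel env env' -> (forall L, coefv v L <> 0%Z -> ~ Hs (lin L (upd M env v u))) ->
  Rel (upd M env v u) (upd M env' v u).
Proof.
  intros [D [HH C]] Free.
  assert (E : forall i, shift (upd M env v u) (upd M env' v u) i = upd M (shift env env') v O0 i).
  { intro i. rewrite <- (shift_upd env env' v u O0 i), add0. auto. }
  split; [|split].
  - intro i. rewrite E. unfold upd. destruct (Nat.eqb i v); auto. apply div_zero.
  - intro i. rewrite E. unfold upd. destruct (Nat.eqb i v); auto.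
  - intro L. rewrite (lin_ext L _ _ E).
    destruct (Z.eq_dec (coefv v L) 0) as [Hb|Hb].
    + rewrite !lin_upd, Hb, !zmul0, !add0. apply C.
    + right. apply Free; auto.
Qed.

Lemma Rel_forth env env' v u :
  Rel env env' -> exists u', Rel (upd M env v u) (upd M env' v u').
Proof.
  intro R.
  destruct (classic (exists L, coefv v L <> 0%Z /\ Hs (lin L (upd M env v u))))
    as [[L [HL HsL]]|NB].
  - apply (Rel_forth_bounded env env' v u L); auto.
  - exists u. apply Rel_forth_free; auto. intros L HL HsL. apply NB. eauto.
Qed.

Lemma Rel_sat phi : forall env env', Rel env env' -> (sat M env phi <-> sat M env' phi).
Proof.
  induction phi as [t s|t s|phi IH|phi1 IH1 phi2 IH2|v phi IH]; intros env env' R; simpl.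
  - destruct (Rel_sign env env' (diffL t s) R) as [[Eq Eq'] _].
    rewrite !lin_diffL in Eq, Eq'.
    split; intro Q; apply subr_eq0; [apply Eq | apply Eq']; rewrite Q; apply addN.
  - rewrite (lt_sub (eval M env t)), (lt_sub (eval M env' t)), <- !lin_diffL.
    apply (Rel_sign env env' _ R).
  - rewrite (IH env env' R). tauto.
  - rewrite (IH1 env env' R), (IH2 env env' R). tauto.
  - split; intros [a Ha].
    + destruct (Rel_forth env env' v a R) as [a' Ra]. exists a'. apply (IH _ _ Ra); auto.
    + destruct (Rel_forth env' env v a (Rel_sym _ _ R)) as [a' Ra]. exists a'.
      apply (IH _ _ (Rel_sym _ _ Ra)); auto.
Qed.

End ConvexTransfer.

(** ** The convex subgroup generated by an element
    [bounded_by B z] says that [|z| <= k B] for some [k]; for [B >= 0] this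
    is the smallest convex subgroup containing [B]. *)

Definition bounded_by (B z : M) : Prop := exists k, le (absM M z) (nmul M k B).

Lemma bounded_by_0 B : bounded_by B O0.
Proof. exists 0%nat. simpl. rewrite abs_pos; apply le_refl. Qed.
Lemma bounded_by_add B x y : bounded_by B x -> bounded_by B y -> bounded_by B (x ⊕ y).
Proof.
  intros [k1 H1] [k2 H2]. exists (k1 + k2)%nat. rewrite nmul_plus.
  eapply le_trans; [apply abs_triangle | apply le_add; auto].
Qed.
Lemma bounded_by_opp B x : bounded_by B x -> bounded_by B (⊖ x).
Proof. intros [k H1]. exists k. rewrite abs_opp; auto. Qed.
Lemma bounded_by_conv B x y : le (absM M x) (absM M y) -> bounded_by B y -> bounded_by B x.
Proof. intros Q [k H1]. exists k. eapply le_trans; eauto. Qed.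
Lemma bounded_by_mono B B' z : le B B' -> bounded_by B z -> bounded_by B' z.
Proof. intros Q [k H1]. exists k. eapply le_trans; eauto. apply nmul_mono; auto. Qed.

Lemma bounded_by_lincomb B m l :
  (forall x, In x l -> bounded_by B x) -> bounded_by B (lincomb M m l).
Proof.
  assert (Bz : forall z x, bounded_by B x -> bounded_by B (zmul M z x)).
  { intros z x Hx.
    apply (H_zmul (bounded_by B)); auto using bounded_by_0, bounded_by_add, bounded_by_opp. }
  revert l; induction m as [|z m IH]; intros l Hl; destruct l as [|x l]; simpl;
    auto using bounded_by_0.
  apply bounded_by_add; [apply Bz, Hl; simpl; auto | apply IH; intros; apply Hl; simpl; auto].
Qed.

(** ** The partial type [Sigma]
    [Sigma c b] says that no nontrivial integer combination of [c] lies in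
    the convex subgroup generated by [max(|b|,1)]. *)

Hypothesis lt01 : lt O0 (sone M).

Definition Bof (b : M) : M := maxM M (absM M b) (sone M).

Lemma Bof_pos b : lt O0 (Bof b).
Proof.
  unfold Bof, maxM. destruct (sltb M (absM M b) (sone M)) eqn:E; auto.
  eapply lt_le_trans; eauto.
Qed.
Lemma Bof_ge0 b : le O0 (Bof b).
Proof. apply lt_le, Bof_pos. Qed.
Lemma Bof_abs b : le (absM M b) (Bof b).
Proof. unfold Bof, maxM. destruct (sltb M (absM M b) (sone M)) eqn:E; [apply lt_le|apply le_refl]; auto. Qed.

Lemma Bof_sum_l x y : le (Bof x) (Bof (Bof x ⊕ Bof y)).
Proof.
  eapply le_trans; [|apply Bof_abs]. rewrite abs_pos.
  - apply le_addpos, Bof_ge0.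
  - rewrite <- (add0 O0). apply le_add; apply Bof_ge0.
Qed.
Lemma Bof_sum_r x y : le (Bof y) (Bof (Bof x ⊕ Bof y)).
Proof. rewrite addC. apply Bof_sum_l. Qed.

Lemma Sigma_iff c b : Sigma M c b <-> forall m, length m = length c ->
   (exists z, In z m /\ z <> 0%Z) -> ~ bounded_by (Bof b) (lincomb M m c).
Proof.
  split.
  - intros Sg m Hm Hz [k Hk]. specialize (Sg m Hm Hz (S k) ltac:(lia)).
    fold (Bof b) in Sg. simpl in Sg.
    assert (Q : lt (nmul M k (Bof b)) (nmul M k (Bof b) ⊕ Bof b)).
    { rewrite <- (add0 (nmul M k (Bof b))) at 1. apply lt_addl, Bof_pos. }
    pose proof (lt_le_trans _ _ _ (lt_trans _ _ _ Q Sg) Hk). congruence.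
  - intros Sg m Hm Hz k Hk. fold (Bof b).
    destruct (sltb M (nmul M k (Bof b)) (absM M (lincomb M m c))) eqn:E; auto.
    exfalso. apply (Sg m Hm Hz). exists k. auto.
Qed.

Definition subv (a b : list M) : list M := addv M a (map (sopp M) b).

Definition sumabs (l : list M) : M := fold_right (fun x acc => absM M x ⊕ acc) O0 l.

Lemma sumabs_ge0 l : le O0 (sumabs l).
Proof. induction l; simpl. - apply le_refl. - rewrite <- (add0 O0). apply le_add; auto. apply abs_ge0. Qed.
Lemma sumabs_in l x : In x l -> le (absM M x) (sumabs l).
Proof.
  induction l; simpl; [tauto|]. intros [<-|Hx].
  - apply le_addpos, sumabs_ge0.
  - eapply le_trans; [apply IHl; auto|]. rewrite addC. apply le_addpos, abs_ge0.
Qed.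
Lemma sumabs_bounded l x : In x l -> bounded_by (Bof (sumabs l)) x.
Proof.
  intro Hx. exists 1%nat. rewrite nmul1. eapply le_trans; [apply sumabs_in; eauto|].
  eapply le_trans; [apply le_abs | apply Bof_abs].
Qed.

Lemma nth_default_P (P : M -> Prop) (l : list M) i :
  (forall x, In x l -> P x) -> P O0 -> P (nth i l O0).
Proof.
  intros H1 H2. destruct (Nat.lt_ge_cases i (length l)).
  - apply H1, nth_In; auto.
  - rewrite nth_overflow; auto.
Qed.

Lemma length_addv (a b : list M) : length a = length b -> length (addv M a b) = length a.
Proof. intro H. unfold addv. rewrite length_map, length_combine, H. lia. Qed.
Lemma nth_addv (a b : list M) i : length a = length b ->
  nth i (addv M a b) O0 = nth i a O0 ⊕ nth i b O0.
Proof.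
  revert b i; induction a; intros b i Hl; destruct b; simpl in *; try discriminate.
  - destruct i; simpl; rewrite add0; auto.
  - destruct i; simpl; auto. apply IHa. lia.
Qed.
Lemma nth_subv (a b : list M) i : length a = length b ->
  nth i (subv a b) O0 = nth i a O0 ⊕ ⊖ nth i b O0.
Proof.
  intro Hl. unfold subv. rewrite nth_addv by (rewrite length_map; auto). f_equal.
  clear Hl. revert i; induction b; intro i; destruct i; simpl; auto; symmetry; apply opp0.
Qed.
Lemma length_subv (a b : list M) : length a = length b -> length (subv a b) = length a.
Proof. intro Hl. apply length_addv. rewrite length_map; auto. Qed.

Lemma subv_divpow r a b : divpow M r a -> divpow M r b -> divpow M r (subv a b).
Proof.
  intros [La Fa] [Lb Fb]. rewrite Forall_forall in Fa, Fb.
  split; [rewrite length_subv; lia|]. apply Forall_forall. intros x Hx.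
  apply (In_nth _ _ O0) in Hx. destruct Hx as [i [_ <-]]. rewrite nth_subv by lia.
  apply div_add; [|apply div_opp]; apply nth_default_P; auto using div_zero.
Qed.
Lemma addv_subv (a b : list M) : length a = length b -> addv M b (subv a b) = a.
Proof.
  intro Hl. apply (nth_ext _ _ O0 O0).
  - rewrite length_addv; rewrite ?length_subv; lia.
  - intros i _. rewrite nth_addv, nth_subv by (rewrite ?length_subv; lia).
    rewrite addCA, addN, add0. auto.
Qed.
Lemma subv_zero (a b : list M) : length a = length b ->
  (forall i, nth i (subv a b) O0 = O0) -> a = b.
Proof.
  intros Hl Z. apply (nth_ext _ _ O0 O0); auto. intros i _.
  apply subr_eq0. rewrite <- nth_subv; auto.
Qed.
Lemma addv_eq_self (c d : list M) : length c = length d -> addv M c d = c ->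
  forall i, nth i d O0 = O0.
Proof.
  intros Hl E i. apply (add_cancel _ _ (nth i c O0)).
  rewrite add0l, addC, <- nth_addv, E; auto.
Qed.

Lemma lincomb_addv m (a b : list M) : length a = length b ->
  lincomb M m (addv M a b) = lincomb M m a ⊕ lincomb M m b.
Proof.
  revert m b; induction a as [|x a IHa]; intros m b Hl; destruct b as [|y b];
    simpl in Hl; try discriminate.
  - destruct m; simpl; rewrite add0; auto.
  - change (addv M (x :: a) (y :: b)) with ((x ⊕ y) :: addv M a b).
    destruct m as [|z m]; simpl.
    + rewrite add0; auto.
    + rewrite zmulDr, IHa by lia. apply addACA.
Qed.
Lemma lincomb_zero m (l : list M) : (forall z, In z m -> z = 0%Z) -> lincomb M m l = O0.
Proof.
  revert l; induction m; intros l H; destruct l; simpl; auto.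
  rewrite (H a), zmul0, add0l by (simpl; auto). apply IHm. intros; apply H; simpl; auto.
Qed.

Lemma lincomb_seq_add (l : list M) k (g h : nat -> Z) :
  lincomb M (map (fun i => (g i + h i)%Z) (seq k (length l))) l =
  lincomb M (map g (seq k (length l))) l ⊕ lincomb M (map h (seq k (length l))) l.
Proof. revert k; induction l; intro k; simpl. - rewrite add0; auto. - rewrite zmulDl, IHl. apply addACA. Qed.
Lemma lincomb_seq_single (l : list M) k j z :
  lincomb M (map (fun i => if Nat.eqb j i then z else 0%Z) (seq k (length l))) l =
  if Nat.leb k j then zmul M z (nth (j - k) l O0) else O0.
Proof.
  revert k; induction l; intro k; simpl.
  - destruct (Nat.leb k j); auto. destruct (j - k)%nat; symmetry; apply zmul_r0.
  - rewrite IHl. destruct (Nat.eqb j k) eqn:E.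
    + apply Nat.eqb_eq in E; subst. rewrite Nat.leb_refl, Nat.sub_diag.
      replace (Nat.leb (S k) k) with false by (symmetry; apply Nat.leb_gt; lia).
      rewrite add0; auto.
    + apply Nat.eqb_neq in E. rewrite zmul0, add0l.
      destruct (Nat.leb (S k) j) eqn:E1.
      * apply Nat.leb_le in E1.
        replace (Nat.leb k j) with true by (symmetry; apply Nat.leb_le; lia).
        replace (j - k)%nat with (S (j - S k)) by lia. auto.
      * apply Nat.leb_gt in E1.
        replace (Nat.leb k j) with false by (symmetry; apply Nat.leb_gt; lia). auto.
Qed.
Lemma lin_vec (l : list M) L :
  lin L (env_of M l) = lincomb M (map (fun i => coefv i L) (seq 0 (length l))) l.
Proof.
  induction L as [|[j z] L IH]; simpl.
  - symmetry. apply lincomb_zero. intros z Hz. apply in_map_iff in Hz.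
    destruct Hz as [? [? _]]; auto.
  - rewrite IH, (map_ext (fun i => if Nat.eqb j i then (z + coefv i L)%Z else coefv i L)
       (fun i => ((if Nat.eqb j i then z else 0%Z) + coefv i L)%Z))
      by (intro i; destruct (Nat.eqb j i); auto).
    rewrite lincomb_seq_add, lincomb_seq_single. simpl. rewrite Nat.sub_0_r. auto.
Qed.

Lemma translate_realizes p c d :
  length d = length c -> (forall x, In x d -> divisibleM M x) ->
  Sigma M c (sumabs d) -> realizes M p c -> realizes M p (addv M c d).
Proof.
  intros Hl Dd Sc Rc phi Hphi.
  set (Hs := bounded_by (Bof (sumabs d))).
  assert (Ed : forall i, shift (env_of M c) (env_of M (addv M c d)) i = env_of M d i).
  { intro i. unfold shift, env_of. rewrite nth_addv by lia.
    rewrite (addC (nth i c O0)), addKr. auto. }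
  assert (R : Rel Hs (env_of M c) (env_of M (addv M c d))).
  { split; [|split].
    - intro i. rewrite Ed. unfold env_of. apply nth_default_P; auto using div_zero.
    - intro i. rewrite Ed. unfold env_of. apply nth_default_P; [apply sumabs_bounded | apply bounded_by_0].
    - intro L. rewrite (lin_ext L _ _ Ed), !lin_vec, Hl.
      set (m := map (fun i => coefv i L) (seq 0 (length c))).
      destruct (classic (exists z, In z m /\ z <> 0%Z)) as [Hz|Hz].
      + right. apply (proj1 (Sigma_iff c _) Sc); auto.
        unfold m. rewrite length_map, length_seq; auto.
      + left. apply lincomb_zero. intros z Hzm. apply NNPP. intro. apply Hz; eauto. }
  apply (Rel_sat Hs (bounded_by_0 _) (bounded_by_add _) (bounded_by_opp _)
           (bounded_by_conv _) phi _ _ R), Rc; auto.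
Qed.

Lemma translate_Sigma c d b : length d = length c ->
  Sigma M c (Bof b ⊕ Bof (sumabs d)) -> Sigma M c b /\ Sigma M (addv M c d) b.
Proof.
  intros Hl Sc. rewrite Sigma_iff in Sc.
  set (B := Bof (Bof b ⊕ Bof (sumabs d))) in Sc.
  assert (Hb : forall z, bounded_by (Bof b) z -> bounded_by B z)
    by (intro z; apply bounded_by_mono, Bof_sum_l).
  split; apply Sigma_iff; intros m Hm Hz Q.
  - apply (Sc m Hm Hz), Hb, Q.
  - rewrite length_addv in Hm by lia. apply (Sc m Hm Hz).
    rewrite lincomb_addv in Q by lia.
    apply (H_sub _ (bounded_by_add B) (bounded_by_opp B) _ (lincomb M m d)); [apply Hb, Q|].
    apply (bounded_by_mono (Bof (sumabs d))); [apply Bof_sum_r|].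
    apply bounded_by_lincomb. intros x Hx. apply sumabs_bounded; auto.
Qed.

Lemma eval_tmulS env k t : eval M env (tmulS k t) = nmul M (S k) (eval M env t).
Proof. induction k; simpl. - rewrite add0l; auto. - simpl in IHk. rewrite IHk. auto. Qed.

Lemma realize_divpow (HT : models_ThZ M) r p c :
  entails_divpow r p -> realizes M p c -> length c = r -> divpow M r c.
Proof.
  intros Hd Hr Hl. split; auto. apply Forall_forall. intros x Hx.
  apply (In_nth _ _ O0) in Hx. destruct Hx as [i [Hi <-]].
  intros k Hk. destruct k as [|k]; [lia|].
  destruct (Hd i k ltac:(lia) M HT (env_of M c) Hr) as [y Q].
  exists y. rewrite eval_tmulS in Q. simpl in Q. unfold upd in Q.
  rewrite Nat.eqb_refl in Q.
  replace (Nat.eqb i (S i)) with false in Q by (symmetry; apply Nat.eqb_neq; lia).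
  exact Q.
Qed.

Lemma injective_of_generic_fibre (HT : models_ThZ M) r n G mul f :
  definable_group M n G mul ->
  tdef_morphism M r n G mul f ->
  (exists (t : list M) (p : form -> Prop),
      inX M r p /\ entails_divpow r p /\
      (forall a a', length a = r -> realizes M p a -> Sigma_t M a t ->
                    length a' = r -> realizes M p a' -> Sigma_t M a' t ->
                    f a = f a' -> a = a')) ->
  forall a a', divpow M r a -> divpow M r a' -> f a = f a' -> a = a'.
Proof.
  intros [_ [_ [_ [Gassoc [e [Ge [Eid Einv]]]]]]] [Fg [Fadd _]]
    [t [p [[_ HX] [Hdiv Hinj]]]] a a' Da Da' Hf.
  assert (Lr : length a = length a') by (destruct Da, Da'; lia).
  set (d := subv a a').
  assert (Dd : divpow M r d) by (apply subv_divpow; auto).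
  assert (Ld : length d = r) by apply Dd.
  assert (Hfd : f d = e).
  { apply (group_right_unit G mul e (f a') (f d)); auto.
    - intros x Gx. apply Eid; auto.
    - intros x Gx. destruct (Einv x Gx) as [x' [? [_ ?]]]. eauto.
    - rewrite <- Fadd by auto. unfold d. rewrite addv_subv; auto. }
  destruct (HX (sumabs d :: map (fun b => Bof b ⊕ Bof (sumabs d)) t)) as [c [Lc [Rc Sc]]].
  assert (Sc_t : forall b, In b t -> Sigma M c b /\ Sigma M (addv M c d) b).
  { intros b Hb. apply translate_Sigma; [lia|]. apply Sc. right. apply in_map_iff. eauto. }
  assert (Rc' : realizes M p (addv M c d)).
  { apply translate_realizes; auto; [lia | apply Forall_forall, Dd | apply Sc; left; auto]. }
  assert (Dc : divpow M r c) by (apply (realize_divpow HT r p); auto).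
  assert (Fc : f (addv M c d) = f c) by (rewrite Fadd, Hfd; auto; apply Eid, Fg; auto).
  assert (Ecd : addv M c d = c).
  { apply Hinj; auto; try (intros b Hb; apply Sc_t; auto). rewrite length_addv; lia. }
  apply subv_zero; auto. apply (addv_eq_self c d); [lia | exact Ecd].
Qed.

End OrderedGroup.

Theorem mainTheorem7 (M : Str) (r n : nat) (G : list M -> Prop)
    (mul : list M -> list M -> list M) (f : list M -> list M) :
  Zgroup M ->
  omega_saturated M ->
  definable_group M n G mul ->
  tdef_morphism M r n G mul f ->
  (exists (t : list M) (p : form -> Prop),
      inX M r p /\ entails_divpow r p /\
      (forall a a', length a = r -> realizes M p a -> Sigma_t M a t ->
                    length a' = r -> realizes M p a' -> Sigma_t M a' t ->
                    f a = f a' -> a = a')) ->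
  forall a a', divpow M r a -> divpow M r a' -> f a = f a' -> a = a'.
Proof.
  intros [HT [Add0 [AddN [Lt01 _]]]] _.
  apply (injective_of_generic_fibre M (Zgroup_addA M HT) (Zgroup_addC M HT) Add0 AddN
    (Zgroup_lt_irr M HT) (Zgroup_lt_trans M HT) (Zgroup_lt_total M HT)
    (Zgroup_lt_addr M HT) Lt01 HT).
Qed.
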